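(* Consider the second-order map defined below. When there are only fundamentalists and extrapolators, i.e. $w^C=0$, the map admits $P_1$, with $\bar e=-\Omega\Delta y^{BP}$ and $\Delta\bar y=\Delta y^{BP}$, as its unique equilibrium. When chartists are present ($w^C>0$), the map also admits the equilibria $P_2$ and $P_3$, with $\bar e=-\Omega\Delta y^{BP}\pm\sqrt{w^C/w^F}$ and $\Delta\bar y=\Delta y^{BP}$.
   Context: The (log) exchange rate $e_t$ and the output growth rate $\Delta y_t$ evolve according to $$e_t=e_{t-1}+(\mu+\rho)\left[w^F\left(-\Omega\Delta y_{t-1}-e_{t-1}\right)^3+w^C\left(e_{t-1}+\Omega\Delta y_{t-1}\right)+w^E\left(e_{t-1}-e_{t-2}\right)\right],$$ $$\Delta y_t=\Delta y_{t-1}+w^{flex}\beta\left\{\Delta y^{BP}-\gamma\left[w^F\left(-\Omega\Delta y_{t-1}-e_{t-1}\right)^3+w^C\left(e_{t-1}+\Omega\Delta y_{t-1}\right)+w^E\left(e_{t-1}-e_{t-2}\right)\right]-\Delta y_{t-1}\right\},$$ where $\mu>0$, $\rho>0$, $0<\beta<1$, $0<\Omega<1$, $0<w^{flex}<1$, $\Delta y^{BP}\in\mathbb{R}$ is a constant, $\gamma=\frac{(1-\theta)(\mu+\rho)}{\theta\pi}>0$ with $\theta\in(0,1)$, $\pi>0$, and $w^F\in(0,1]$, $w^C,w^E\in[0,1)$ are the shares of fundamentalists, chartists and trend-extrapolators with $w^F+w^C+w^E=1$. An equilibrium is a pair $(\bar e,\Delta\bar y)$ such that $e_t=e_{t-1}=e_{t-2}=\bar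 e$ and $\Delta y_t=\Delta y_{t-1}=\Delta\bar y$ is a solution of the map. *)

From Stdlib Require Import Reals.
Open Scope R_scope.

Definition gamma_of (theta pi mu rho : R) : R :=
  (1 - theta) * (mu + rho) / (theta * pi).

Definition bracket (Omega wF wC wE e1 e2 dy1 : R) : R :=
  wF * (- Omega * dy1 - e1) ^ 3 + wC * (e1 + Omega * dy1) + wE * (e1 - e2).

(* The second-order map: given e_{t-1} = e1, e_{t-2} = e2, dy_{t-1} = dy1,
   returns e_t. *)
Definition e_next (mu rho Omega wF wC wE e1 e2 dy1 : R) : R :=
  e1 + (mu + rho) * bracket Omega wF wC wE e1 e2 dy1.

Definition dy_next (mu rho beta Omega wflex dyBP theta pi wF wC wE e1 e2 dy1 : R) : R :=
  dy1 + wflex * beta *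
    (dyBP - gamma_of theta pi mu rho * bracket Omega wF wC wE e1 e2 dy1 - dy1).

Definition is_equilibrium (mu rho beta Omega wflex dyBP theta pi wF wC wE eb dyb : R) : Prop :=
  e_next mu rho Omega wF wC wE eb eb dyb = eb /\
  dy_next mu rho beta Omega wflex dyBP theta pi wF wC wE eb eb dyb = dyb.

(* At a steady state the trend-extrapolator term vanishes and the common
   bracket factors as x (w^C - w^F x^2) with x = e + Omega dy.  The e-equation
   forces the bracket to vanish, after which the dy-equation forces
   dy = dy^BP; the roots of the cubic are 0 and +-sqrt (w^C / w^F), which all
   coincide when w^C = 0. *)
From Stdlib Require Import Reals Lra Psatz.
Open Scope R_scope.

Lemma bracket_steady (Omega wF wC wE e dy : R) :
  bracket Omega wF wC wE e e dy =
  (e + Omega * dy) * (wC - wF * (e + Omega * dy) ^ 2).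
Proof. unfold bracket; ring. Qed.

Lemma cubic_eq0_iff (a c x : R) : 0 < a -> 0 <= c ->
  x * (c - a * x ^ 2) = 0 <-> x = 0 \/ x = sqrt (c / a) \/ x = - sqrt (c / a).
Proof.
  intros Ha Hc.
  set (s := sqrt (c / a)).
  assert (Hss : s * s = c / a).
  { apply sqrt_sqrt, Rmult_le_pos; [lra|].
    apply Rlt_le, Rinv_0_lt_compat; lra. }
  assert (Hfactor : x * (c - a * x ^ 2) = a * (x * ((s - x) * (s + x)))).
  { replace c with (a * (s * s)) at 1 by (rewrite Hss; field; lra). ring. }
  rewrite Hfactor; split.
  - intros H0.
    destruct (Rmult_integral _ _ H0) as [|Hx]; [lra|].
    destruct (Rmult_integral _ _ Hx) as [|Hsx]; [now left|].
    destruct (Rmult_integral _ _ Hsx); right; [left|right]; lra.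
  - intros [Hx | [Hx | Hx]]; rewrite Hx; ring.
Qed.

Lemma is_equilibrium_iff (mu rho beta Omega wflex dyBP theta pi wF wC wE eb dyb : R) :
  0 < mu + rho -> wflex * beta <> 0 ->
  is_equilibrium mu rho beta Omega wflex dyBP theta pi wF wC wE eb dyb <->
  dyb = dyBP /\ (eb + Omega * dyBP) * (wC - wF * (eb + Omega * dyBP) ^ 2) = 0.
Proof.
  intros Hmurho Hwb.
  unfold is_equilibrium, e_next, dy_next; rewrite bracket_steady.
  set (B := (eb + Omega * dyb) * (wC - wF * (eb + Omega * dyb) ^ 2)).
  split.
  - intros [He Hdy].
    assert (HB : B = 0).
    { apply (Rmult_eq_reg_l (mu + rho)); lra. }
    rewrite HB in Hdy.
    assert (Hgap : wflex * beta * (dyBP - dyb) = 0) by lra.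
    destruct (Rmult_integral _ _ Hgap) as [|Hd]; [contradiction|].
    assert (Hdyb : dyb = dyBP) by lra.
    split; [exact Hdyb|].
    rewrite <- Hdyb; exact HB.
  - intros [Hdyb HB]; subst dyb; unfold B; rewrite HB; split; ring.
Qed.

Theorem proposition4
  (mu rho beta Omega wflex dyBP theta pi wF wC wE : R)
  (Hmu : 0 < mu) (Hrho : 0 < rho)
  (Hbeta0 : 0 < beta) (Hbeta1 : beta < 1)
  (HOm0 : 0 < Omega) (HOm1 : Omega < 1)
  (Hwf0 : 0 < wflex) (Hwf1 : wflex < 1)
  (Hth0 : 0 < theta) (Hth1 : theta < 1) (Hpi : 0 < pi)
  (HwF0 : 0 < wF) (HwF1 : wF <= 1)
  (HwC0 : 0 <= wC) (HwC1 : wC < 1)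
  (HwE0 : 0 <= wE) (HwE1 : wE < 1)
  (Hsum : wF + wC + wE = 1) :
  (wC = 0 ->
     forall eb dyb : R,
       is_equilibrium mu rho beta Omega wflex dyBP theta pi wF wC wE eb dyb <->
       (eb = - Omega * dyBP /\ dyb = dyBP)) /\
  (0 < wC ->
     forall eb dyb : R,
       is_equilibrium mu rho beta Omega wflex dyBP theta pi wF wC wE eb dyb <->
       (dyb = dyBP /\
        (eb = - Omega * dyBP \/
         eb = - Omega * dyBP + sqrt (wC / wF) \/
         eb = - Omega * dyBP - sqrt (wC / wF)))).
Proof.
  assert (Hmurho : 0 < mu + rho) by lra.
  assert (Hwb : wflex * beta <> 0) by nra.
  split; intros HwC eb dyb;
    rewrite is_equilibrium_iff, cubic_eq0_iff by (assumption || lra).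
  - subst wC; rewrite Rdiv_0_l, sqrt_0.
    intuition lra.
  - intuition lra.
Qed.
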